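(* Let $K$ be a finite field of characteristic $p$ and order $q$, let $s$ be a positive integer with $\gcd(s,q-1)=1$, and let $W=\sum_{u\in K^\times}W_u[u]\in L[K^\times]$. Then $|W|=q$ and $W\overline{W}=q^2[1]$. Equivalently, $\sum_{u\in K^\times}W_u=q$, and for every $c\in K^\times$, $\sum_{y\in K^\times}W_{cy}\overline{W_y}$ equals $q^2$ if $c=1$ and $0$ otherwise.
   Context: $\zeta=\exp(2\pi i/p)$, $\psi(x)=\zeta^{\mathrm{Tr}(x)}$ with $\mathrm{Tr}$ the absolute trace of $K$ to $\mathbb{F}_p$; $W_u=\sum_{x\in K}\psi(x^s-ux)$. $L=\mathbb{Q}(\zeta,\xi)$ with $\xi=\exp(2\pi i/(q-1))$, and $L[K^\times]$ is the group algebra of the multiplicative group $K^\times$ over $L$, whose elements are written $S=\sum_{u\in K^\times}S_u[u]$. For such $S$, $\overline{S}=\sum_{u}\overline{S_u}[u^{-1}]$ and $|S|=\sum_u S_u$. *)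

From HB Require Import structures.
From mathcomp Require Import all_boot all_order all_algebra all_field.
Set Implicit Arguments. Unset Strict Implicit. Unset Printing Implicit Defensive.
Import Order.TTheory GRing.Theory Num.Theory.
Local Open Scope ring_scope.

(* zeta = exp(2 pi i / p) in algC: p.-root (-1) is exp(i pi / p) by algC's
   convention (minimal non-negative argument), so its square is exp(2 pi i/p). *)
Definition zeta (p : nat) : algC := (p.-root (-1)) ^+ 2.

Definition abs_trace (K : finFieldType) (p : nat) (x : K) : K :=
  \sum_(i < logn p #|K|) x ^+ (p ^ i).

(* the integer representative in [0, p) of Tr(x) (which lies in the prime field) *)
Definition trace_nat (K : finFieldType) (p : nat) (x : K) : nat :=
  if [pick k : 'I_p | (k%:R : K) == abs_trace p x] is Some k then val k else 0%N.

Definition psi (K : finFieldType) (p : nat) (x : K) : algC :=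
  zeta p ^+ trace_nat p x.

Definition Wsum (K : finFieldType) (p s : nat) (u : K) : algC :=
  \sum_(x : K) psi p (x ^+ s - u * x).

(* Group algebra L[K^x] (coefficients in algC, which contains L):
   an element S = sum_{u in K^x} S_u [u] is its coefficient function on K^x
   (values at 0 are irrelevant). *)
Definition galg (K : finFieldType) := K -> algC.

(* coefficient of [c] in S*T = sum_{x y = c} S_x T_y *)
Definition galg_mul (K : finFieldType) (S T : galg K) : galg K :=
  fun c => \sum_(y : K | y != 0) S (c / y) * T y.

(* bar S = sum_u conj(S_u) [u^-1] *)
Definition galg_bar (K : finFieldType) (S : galg K) : galg K :=
  fun u => (S u^-1)^*.

Definition galg_aug (K : finFieldType) (S : galg K) : algC :=
  \sum_(u : K | u != 0) S u.

Definition galg_one (K : finFieldType) : galg K := fun u => (u == 1)%:R.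

From HB Require Import structures.
From mathcomp Require Import all_boot all_order all_algebra all_field.
From mathcomp Require Import ring.
Set Implicit Arguments. Unset Strict Implicit.
Import Order.TTheory GRing.Theory Num.Theory.
Local Open Scope ring_scope.

(* Tr is additive and fixed by Frobenius, so it lands in the prime field and
   psi = zeta^Tr is a nontrivial additive character; everything then rests on
   the orthogonality relation sum_x psi(x b) = q [b = 0].  Since x |-> x^s
   permutes K, summing W_u over u only leaves the term x = 0.  Expanding
   W_(cy) conj(W_y) and summing over y first forces z = c x, which leaves
   q sum_x psi(x^s (1 - c^s)); this is q^2 if c^s = 1, i.e. c = 1, and 0
   otherwise. *)

Lemma eqr_nat_pchar {R : nzRingType} {p : nat} (hp : p \in [pchar R]) (m n : nat) :
  (m%:R == n%:R :> R) = (m == n %[mod p]).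
Proof.
wlog le_nm : m n / (n <= m)%N.
  move=> eq_mod; case: (leqP n m) => [|/ltnW] /eq_mod //.
  by rewrite eq_sym [X in _ = X]eq_sym.
by rewrite eqn_mod_dvd // (dvdn_pcharf hp) natrB // subr_eq0.
Qed.

Lemma pFrobenius_fixed_natr {R : idomainType} {p : nat} (hp : p \in [pchar R])
  {y : R} : y ^+ p = y -> exists k : 'I_p, y = k%:R.
Proof.
move=> yp; have [/existsP[k /eqP->]|not_nat] := boolP [exists k : 'I_p, y == k%:R].
  by exists k.
have p_gt1 := prime_gt1 (pcharf_prime hp).
pose P : {poly R} := 'X^p - 'X.
have sizeP : size P = p.+1 by rewrite size_polyDl ?size_polyXn // size_polyN size_polyX.
have P_neq0 : P != 0 by rewrite -size_poly_eq0 sizeP.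
have rootP z : z ^+ p = z -> root P z by move=> zp; rewrite /root !hornerE zp subrr.
pose rs := y :: [seq (val k)%:R | k : 'I_p].
suff : (size rs < size P)%N by rewrite /= size_map size_enum_ord sizeP ltnn.
apply: max_poly_roots => //=.
  rewrite rootP //=; apply/allP => _ /mapP[k _ ->].
  by apply: rootP; rewrite -(pFrobenius_autE hp) rmorph_nat.
rewrite map_inj_uniq ?enum_uniq ?andbT.
  by apply: contraNN not_nat => /mapP[k _ ->]; apply/existsP; exists k.
move=> i j /eqP; rewrite (eqr_nat_pchar hp) !modn_small //.
by move/eqP/val_inj.
Qed.

Section AbsoluteTrace.
Variables (K : finFieldType) (p : nat).
Hypothesis hp : p \in [pchar K].
Let n := logn p #|K|.
Let p_gt1 : (1 < p)%N := prime_gt1 (pcharf_prime hp).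

Let card_K : #|K| = (p ^ n)%N.
Proof. exact: card_pprimeChar hp. Qed.

Let n_gt0 : (0 < n)%N.
Proof. by rewrite lt0n; apply: contraTneq (finNzRing_gt1 K) => n0; rewrite card_K n0. Qed.

Lemma abs_traceD (x y : K) : abs_trace p (x + y) = abs_trace p x + abs_trace p y.
Proof.
rewrite /abs_trace -big_split /=; apply: eq_bigr => i _; apply: exprDn_pchar.
by rewrite (eq_pnat _ (pcharf_eq hp)) pnatX pnat_id ?(pcharf_prime hp).
Qed.

Lemma abs_trace_pFrobenius (x : K) : abs_trace p x ^+ p = abs_trace p x.
Proof.
rewrite -(pFrobenius_autE hp) /abs_trace rmorph_sum -/n.
rewrite -(prednK n_gt0) big_ord_recr big_ord_recl /= addrC.
under eq_bigr do rewrite pFrobenius_autE -exprM -expnSr.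
by rewrite pFrobenius_autE -exprM -expnSr prednK // -card_K expf_card.
Qed.

Lemma trace_natE (x : K) : (trace_nat p x)%:R = abs_trace p x.
Proof.
rewrite /trace_nat; case: pickP => [k /eqP // | not_nat].
have [k tr_k] := pFrobenius_fixed_natr hp (abs_trace_pFrobenius x).
by have := not_nat k; rewrite tr_k eqxx.
Qed.

Lemma abs_trace_neq0 : exists a : K, abs_trace p a != 0.
Proof.
apply/existsP; apply: contraT; rewrite negb_exists => /forallP tr0.
pose P : {poly K} := \sum_(i < n) 'X^(p ^ i).
have P_neq0 : P != 0.
  apply/eqP => /(congr1 (coefp 1)); rewrite /= coef_sum coef0 -(prednK n_gt0).
  rewrite big_ord_recl big1 => [|i _]; first by rewrite coefXn addr0 => /eqP; rewrite oner_eq0.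
  rewrite coefXn; have : (p ^ 0 < p ^ bump 0 i)%N by rewrite ltn_exp2l.
  by rewrite expn0 => /ltn_eqF ->.
have sizeP : (size P <= (p ^ n.-1).+1)%N.
  apply: leq_trans (size_sum _ _ _) _; apply/bigmax_leqP => i _.
  by rewrite size_polyXn ltnS leq_exp2l // -ltnS prednK.
have all_roots : all (root P) (enum K).
  apply/allP => a _; rewrite /root horner_sum.
  under eq_bigr do rewrite hornerXn.
  exact: negbNE (tr0 a).
have := max_poly_roots P_neq0 all_roots (enum_uniq K).
rewrite -cardE card_K => /leq_trans/(_ sizeP).
by rewrite ltnS leqNgt ltn_exp2l // ltn_predL n_gt0.
Qed.
End AbsoluteTrace.

Lemma prime_prim_root {R : nzRingType} {p : nat} {z : R} :
  prime p -> z ^+ p = 1 -> z != 1 -> p.-primitive_root z.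
Proof.
move=> p_pr zp z_neq1; have [m prim_m m_dvd_p] := prim_order_exists (prime_gt0 p_pr) zp.
have /primeP[_ p_div] := p_pr.
have /orP[/eqP m1 | /eqP <- //] := p_div m m_dvd_p.
by have := prim_expr_order prim_m; rewrite m1 expr1 => z1; rewrite z1 eqxx in z_neq1.
Qed.

Lemma zeta_prim_root {p : nat} : prime p -> p.-primitive_root (zeta p).
Proof.
move=> p_pr; have p_gt1 := prime_gt1 p_pr; set r : algC := p.-root (-1).
have r_p : r ^+ p = -1 := rootCK (ltnW p_gt1) (-1).
apply: prime_prim_root => //; first by rewrite -exprM mulnC exprM r_p sqrrN expr1n.
rewrite /zeta -/r sqrf_eq1; apply/norP; split; apply/eqP => r_eq.
  by move: r_p; rewrite r_eq expr1n => /eqP; rewrite -addr_eq0 -mulr2n pnatr_eq0.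
by have := @rootC_lt0 algC p (-1) p_gt1; rewrite -/r r_eq ltrN10.
Qed.

Lemma conjC_unity_root {C : numClosedFieldType} {n : nat} {z : C} :
  (0 < n)%N -> z ^+ n = 1 -> z^* = z^-1.
Proof.
move=> n_gt0 zn; have norm_z : `|z| = 1.
  by apply/eqP; rewrite -(pexpr_eq1 n_gt0) // -normrX zn normr1.
by rewrite invC_norm norm_z expr1n invr1 mul1r.
Qed.

Section AdditiveCharacter.
Variables (K : finFieldType) (p : nat).
Hypothesis hp : p \in [pchar K].
Let p_pr : prime p := pcharf_prime hp.
Let zeta_prim := zeta_prim_root p_pr.

Lemma psi_exprE (x : K) (k : nat) : k%:R = abs_trace p x -> psi p x = zeta p ^+ k.
Proof.
move=> tr_k; apply/eqP; rewrite (eq_prim_root_expr zeta_prim) -(eqr_nat_pchar hp).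
by rewrite (trace_natE hp) tr_k.
Qed.

Lemma psiD (x y : K) : psi p (x + y) = psi p x * psi p y.
Proof.
rewrite (@psi_exprE _ (trace_nat p x + trace_nat p y)) ?exprD //.
by rewrite natrD !(trace_natE hp) (abs_traceD hp).
Qed.

Lemma psi0 : psi p (0 : K) = 1.
Proof.
apply: (@psi_exprE _ 0); apply: (addrI (abs_trace p (0 : K))).
by rewrite -(abs_traceD hp) !addr0.
Qed.

Lemma psi_conj (x : K) : (psi p x)^* = psi p (- x).
Proof.
have psi_p : psi p x ^+ p = 1 by rewrite exprAC (prim_expr_order zeta_prim) expr1n.
rewrite (conjC_unity_root (prime_gt0 p_pr) psi_p); apply: mulr1_eq.
by rewrite -psiD subrr psi0.
Qed.

Lemma psi_nontrivial : exists a : K, psi p a != 1.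
Proof.
have [a tr_a] := abs_trace_neq0 hp; exists a.
by rewrite -(prim_order_dvd zeta_prim) (dvdn_pcharf hp) (trace_natE hp).
Qed.

Lemma sum_psi_mul (b : K) :
  \sum_(x : K) psi p (x * b) = if b == 0 then #|K|%:R else 0.
Proof.
have [-> | b_neq0] := eqVneq b 0.
  by under eq_bigr do rewrite mulr0 psi0; rewrite sumr_const.
have -> : \sum_(x : K) psi p (x * b) = \sum_(x : K) psi p x.
  by rewrite [RHS](reindex_inj (mulIf b_neq0)).
have [a psi_a] := psi_nontrivial; set S := \sum_(x : K) psi p x.
have S_shift : S = psi p a * S.
  rewrite /S mulr_sumr [LHS](reindex_inj (addrI a)).
  by apply: eq_bigr => x _; rewrite psiD.
have /eqP : (1 - psi p a) * S = 0 by rewrite mulrBl mul1r -S_shift subrr.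
by rewrite mulf_eq0 subr_eq0 eq_sym (negbTE psi_a) => /eqP.
Qed.

Lemma psi_correlation (f g : K -> K) (c : K) :
  \sum_(y : K) (\sum_(x : K) psi p (f x - c * y * x))
                 * (\sum_(z : K) psi p (g z - y * z))^*
    = #|K|%:R * \sum_(x : K) psi p (f x - g (c * x)).
Proof.
have expand y : (\sum_x psi p (f x - c * y * x)) * (\sum_z psi p (g z - y * z))^*
    = \sum_x \sum_z psi p (f x - g z) * psi p (y * (z - c * x)).
  rewrite rmorph_sum mulr_suml; apply: eq_bigr => x _.
  rewrite mulr_sumr; apply: eq_bigr => z _.
  by rewrite /= psi_conj -!psiD; congr (psi p _); ring.
under eq_bigr do rewrite expand.
rewrite exchange_big mulr_sumr; apply: eq_bigr => x _ /=; rewrite exchange_big /=.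
under eq_bigr => z _ do rewrite -mulr_sumr sum_psi_mul subr_eq0.
rewrite (bigD1 (c * x)) //= eqxx big1 => [|z /negbTE->]; last exact: mulr0.
by rewrite addr0 mulrC.
Qed.

End AdditiveCharacter.

Section CoprimePower.
Variables (K : finFieldType) (s : nat).
Hypotheses (s_gt0 : (0 < s)%N) (s_coprime : coprime s #|K|.-1).

Lemma expf_coprime_eq1 (z : K) : z ^+ s = 1 -> z = 1.
Proof.
move=> zs; have z_neq0 : z != 0.
  by apply: contra_eq_neq zs => ->; rewrite expr0n gtn_eqF // eq_sym oner_neq0.
have card_gt1 := finNzRing_gt1 K.
have card_gt0 : (0 < #|K|.-1)%N by rewrite ltn_predRL.
have z_unit : z ^+ #|K|.-1 = 1.
  by apply: (mulfI z_neq0); rewrite -exprS prednK ?expf_card ?mulr1 // ltnW.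
have [m prim_m m_dvd] := prim_order_exists card_gt0 z_unit.
have : (m %| gcdn s #|K|.-1)%N by rewrite dvdn_gcd m_dvd (prim_order_dvd prim_m) zs eqxx.
rewrite (eqP s_coprime) dvdn1 => /eqP m1.
by have := prim_expr_order prim_m; rewrite m1 expr1.
Qed.

Lemma expf_coprime_inj : injective (fun x : K => x ^+ s).
Proof.
move=> x y /= xy; have [y0 | y_neq0] := eqVneq y 0.
  by move/eqP: xy; rewrite y0 expr0n gtn_eqF // expf_eq0 => /andP[_ /eqP].
have : (x / y) ^+ s = 1 by rewrite exprMn xy exprVn divff // expf_neq0.
by move/expf_coprime_eq1 => xy1; rewrite -(divfK y_neq0 x) xy1 mul1r.
Qed.

Lemma sum_expf_coprime {V : nmodType} (F : K -> V) :
  \sum_(x : K) F (x ^+ s) = \sum_(x : K) F x.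
Proof. by rewrite [RHS](reindex_inj expf_coprime_inj). Qed.

End CoprimePower.

Section WeilSums.
Variables (K : finFieldType) (p s : nat).
Hypotheses (hp : p \in [pchar K]) (s_gt0 : (0 < s)%N) (s_coprime : coprime s #|K|.-1).
Local Notation W := (Wsum (K := K) p s).

Lemma Wsum0 : W 0 = 0.
Proof.
rewrite /Wsum; under eq_bigr do rewrite mul0r subr0.
rewrite (sum_expf_coprime s_gt0 s_coprime (psi p)).
by have := sum_psi_mul hp 1; rewrite oner_eq0; under eq_bigr do rewrite mulr1.
Qed.

Lemma sum_Wsum : \sum_(u : K) W u = #|K|%:R.
Proof.
rewrite exchange_big /=.
have split_x (x : K) :
    \sum_(u : K) psi p (x ^+ s - u * x) = psi p (x ^+ s) * \sum_(u : K) psi p (u * - x).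
  by rewrite mulr_sumr; apply: eq_bigr => u _; rewrite -(psiD hp) mulrN.
under eq_bigr do rewrite split_x (sum_psi_mul hp) oppr_eq0.
rewrite (bigD1 0) //= eqxx big1 => [|x /negbTE->]; last by rewrite mulr0.
by rewrite expr0n gtn_eqF // (psi0 hp) mul1r addr0.
Qed.

Lemma sum_Wsum_neq0 : \sum_(u : K | u != 0) W u = #|K|%:R.
Proof. by rewrite -sum_Wsum [RHS](bigD1 0) //= Wsum0 add0r. Qed.

Lemma Wsum_correlation (c : K) :
  \sum_(y : K | y != 0) W (c * y) * (W y)^* =
    if c == 1 then (#|K| ^ 2)%:R else 0.
Proof.
have -> : \sum_(y : K | y != 0) W (c * y) * (W y)^* = \sum_(y : K) W (c * y) * (W y)^*.
  by rewrite [RHS](bigD1 0) //= mulr0 Wsum0 mul0r add0r.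
rewrite (psi_correlation hp).
have factor (x : K) : x ^+ s - (c * x) ^+ s = x ^+ s * (1 - c ^+ s).
  by rewrite exprMn; ring.
under eq_bigr do rewrite factor.
rewrite (sum_expf_coprime s_gt0 s_coprime (fun t => psi p (t * (1 - c ^+ s)))).
rewrite (sum_psi_mul hp) subr_eq0 eq_sym.
have -> : (c ^+ s == 1) = (c == 1).
  by apply/eqP/eqP => [/(expf_coprime_eq1 s_gt0 s_coprime) | ->]; rewrite ?expr1n.
by case: eqP => _; rewrite ?mulr0 // -natrM mulnn.
Qed.

End WeilSums.

Lemma galg_mul_barE (K : finFieldType) (S : galg K) (c : K) :
  galg_mul S (galg_bar S) c = \sum_(y : K | y != 0) S (c * y) * (S y)^*.
Proof.
rewrite /galg_mul /galg_bar (reindex_inj invr_inj) /=.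
by apply: eq_big => [y | y _]; rewrite ?invr_eq0 ?invrK.
Qed.

Theorem lemma5p8 (K : finFieldType) (p s : nat)
    (hp : p \in [pchar K]) (hs : (0 < s)%N) (hcop : coprime s (#|K|.-1)) :
  let q := #|K| in
  let W : galg K := Wsum p s in
  [/\ galg_aug W = q%:R,
      (forall c : K, c != 0 ->
         galg_mul W (galg_bar W) c = (q ^ 2)%:R * galg_one c),
      \sum_(u : K | u != 0) W u = q%:R
    & forall c : K, c != 0 ->
        \sum_(y : K | y != 0) W (c * y) * (W y)^* =
          if c == 1 then (q ^ 2)%:R else 0].
Proof.
move=> q W; have aug := sum_Wsum_neq0 hp hs hcop.
have corr := Wsum_correlation hp hs hcop.
split=> // c _; rewrite galg_mul_barE corr /galg_one.
by case: (c == 1); rewrite ?mulr1 ?mulr0.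
Qed.
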